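(* Consider binary node classification with classes $\{0,1\}$, and let $k\in\{0,1\}$. Let $c_0,c_1\in(0,1)$ be the class homophily parameters, and assume the classes are balanced, i.e. $P(\hat{Y}=0)=P(\hat{Y}=1)$, and the graph is heterophilic, i.e. $c_k < 1-c_{1-k}$. Then for any node $i$ with neighborhood $\mathcal{N}(i)$ and observed neighbor labels $\{Y_j=y_j\}_{j\in\mathcal{N}(i)}$, $$P\big(\hat{Y}_i = k \mid \{Y_j=y_j\}_{j\in\mathcal{N}(i)}\big) > 0.5$$ if and only if $$|\mathcal{N}_k(i)| < |\mathcal{N}_{1-k}(i)| \cdot \frac{\log c_{1-k} - \log (1 - c_k)}{\log c_k - \log (1 - c_{1-k})}.$$
   Context: Model: each node $i$ has a (latent/soft) class $\hat{Y}_i\in\{0,1\}$, and each neighbor $j\in\mathcal{N}(i)$ has an observed label $Y_j\in\{0,1\}$. Given $\hat{Y}_i$, the neighbor labels are conditionally independent with $P(Y_j=k\mid \hat{Y}_i=k)=c_k$ and $P(Y_j=1-k\mid\hat{Y}_i=k)=1-c_k$ for $k\in\{0,1\}$ ($c_k$ is called the class homophily of class $k$). The posterior is obtained by Bayes' rule: $P(\hat Y_i=k\mid\{Y_j=y_j\}_{j\in\mathcal N(i)})\propto P(\hat Y_i=k)\prod_{j\in\mathcal N(i)}P(Y_j=y_j\mid \hat Y_i=k)$. Notation: $\mathcal{N}_k(i)=\{j\in\mathcal{N}(i): y_j=k\}$ and $\mathcal{N}_{1-k}(i)=\{j\in\mathcal{N}(i): y_j=1-k\}$. *)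

From mathcomp Require Import all_boot all_order all_algebra.
From mathcomp Require Import reals exp.
Set Implicit Arguments. Unset Strict Implicit. Unset Printing Implicit Defensive.
Import Order.TTheory GRing.Theory Num.Theory.
Local Open Scope ring_scope.

(* Classes {0,1} are encoded as bool: false = 0, true = 1; 1 - k is ~~ k. *)

(* P(Y_j = yj | hatY_i = k): c_k if yj = k, else 1 - c_k. *)
Definition lik {R : realType} (c : bool -> R) (k yj : bool) : R :=
  if yj == k then c k else 1 - c k.

Definition joint {R : realType} {T : finType} (pi : bool -> R) (c : bool -> R)
    (N : {set T}) (y : T -> bool) (k : bool) : R :=
  pi k * \prod_(j in N) lik c k (y j).

Definition posterior {R : realType} {T : finType} (pi : bool -> R) (c : bool -> R)
    (N : {set T}) (y : T -> bool) (k : bool) : R :=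
  joint pi c N y k / \sum_(k' : bool) joint pi c N y k'.

Definition Nk {T : finType} (N : {set T}) (y : T -> bool) (k : bool) : {set T} :=
  [set j in N | y j == k].

From mathcomp Require Import all_boot all_order all_algebra.
From mathcomp Require Import reals exp.
From mathcomp Require Import lra.
Import Order.TTheory GRing.Theory Num.Theory.
Local Open Scope ring_scope.

(* With equal priors the posterior of class k exceeds 1/2 exactly when the
   likelihood of the observed labels under k exceeds that under 1 - k.  Both
   likelihoods are monomials in c_k, 1 - c_k, c_(1-k), 1 - c_(1-k) with exponents
   |N_k(i)| and |N_(1-k)(i)|, so after taking logarithms the comparison is linear
   in these two counts.  Heterophily makes the coefficient
   ln c_k - ln (1 - c_(1-k)) of |N_k(i)| negative, and dividing by it yields the
   stated threshold. *)

Lemma half_lt_ratio_sum (R : realFieldType) (a b : R) :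
  0 < a + b -> (1 / 2 < a / (a + b)) = (b < a).
Proof.
move=> ab_gt0; rewrite ltr_pdivlMr //.
by apply/idP/idP => ?; lra.
Qed.

Lemma ltr_lin2_ndiv (R : realFieldType) (a b x1 x2 x3 x4 : R) :
  x1 - x4 < 0 ->
  (b * x3 + a * x4 < a * x1 + b * x2) = (a < b * ((x3 - x2) / (x1 - x4))).
Proof.
move=> d_lt0; rewrite mulrA ltr_ndivlMr // mulrBr mulrBr.
by apply/idP/idP => ?; lra.
Qed.

Section Likelihood.

Variables (R : realType) (T : finType) (c : bool -> R) (N : {set T}) (y : T -> bool).
Hypotheses (c_gt0 : forall b, 0 < c b) (c_lt1 : forall b, c b < 1).

Lemma subr1c_gt0 b : 0 < 1 - c b.
Proof. by rewrite subr_gt0. Qed.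

Lemma lik_gt0 k yj : 0 < lik c k yj.
Proof. by rewrite /lik; case: ifP; rewrite ?subr1c_gt0. Qed.

Lemma prod_likE b :
  \prod_(j in N) lik c b (y j) =
  c b ^+ #|Nk N y b| * (1 - c b) ^+ #|Nk N y (~~ b)|.
Proof.
rewrite (bigID (fun j => y j == b)) /= -!prodr_const; congr (_ * _).
  apply: eq_big => j; first by rewrite /Nk inE.
  by move=> /andP[_ /eqP ->]; rewrite /lik eqxx.
apply: eq_big => j; first by rewrite /Nk inE; case: (y j); case: b.
by move=> /andP[_ /negbTE yj_neq]; rewrite /lik yj_neq.
Qed.

Lemma ln_prod_lik b :
  ln (\prod_(j in N) lik c b (y j)) =
  #|Nk N y b|%:R * ln (c b) + #|Nk N y (~~ b)|%:R * ln (1 - c b).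
Proof.
have [cb_gt0 c1b_gt0] := (c_gt0 b, subr1c_gt0 b).
by rewrite prod_likE lnM ?posrE ?exprn_gt0 // !lnXn // !mulr_natl.
Qed.

Lemma posterior_gt_half (pi : bool -> R) k :
  (forall b, 0 < pi b) ->
  (1 / 2 < posterior pi c N y k) = (joint pi c N y (~~ k) < joint pi c N y k).
Proof.
move=> pi_gt0; have joint_gt0 b : 0 < joint pi c N y b.
  by rewrite mulr_gt0 // prodr_gt0 // => j _; apply: lik_gt0.
rewrite /posterior big_bool /=.
have -> : joint pi c N y true + joint pi c N y false =
          joint pi c N y k + joint pi c N y (~~ k) by case: k; rewrite // addrC.
by rewrite half_lt_ratio_sum // addr_gt0.
Qed.

End Likelihood.

Theorem mainTheorem2 (R : realType) (T : finType) (pi c : bool -> R) (k : bool)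
    (N : {set T}) (y : T -> bool)
    (hpi_pos : forall b, 0 < pi b) (hpi_sum : pi false + pi true = 1)
    (hbal : pi false = pi true)
    (hc0 : forall b, 0 < c b) (hc1 : forall b, c b < 1)
    (hhet : c k < 1 - c (~~ k)) :
  (1 / 2 < posterior pi c N y k) <->
  ((#|Nk N y k|)%:R < (#|Nk N y (~~ k)|)%:R *
     ((ln (c (~~ k)) - ln (1 - c k)) / (ln (c k) - ln (1 - c (~~ k))))).
Proof.
have pi_negk : pi (~~ k) = pi k by case: (k).
have lik_prod_gt0 b : 0 < \prod_(j in N) lik c b (y j).
  by rewrite prodr_gt0 // => j _; apply: lik_gt0.
rewrite posterior_gt_half // /joint pi_negk ltr_pM2l //.
rewrite -(ltr_ln (lik_prod_gt0 _) (lik_prod_gt0 _)).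
rewrite !ln_prod_lik // negbK ltr_lin2_ndiv //.
by rewrite subr_lt0 ltr_ln ?posrE ?subr1c_gt0.
Qed.
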